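(* Let $\mathbb{K}$ be a countable set, $m\ge2$ an even integer, $q=m/2$, $\mathcal{X}$ a nonempty set, and $(\phi_k)_{k\in\mathbb{K}}$ measurable functions $\phi_k\colon\mathcal{X}\to\mathbb{C}$ with $(\phi_k(x))_{k\in\mathbb{K}}\in\ell^m(\mathbb{K};\mathbb{C})$ for every $x\in\mathcal{X}$. Set $\Phi(x)=(\overline{\phi_k(x)})_{k\in\mathbb{K}}$. Then the function $$K\colon\mathcal{X}^q\times\mathcal{X}^q\to\mathbb{C},\quad K(x'_1,\dots,x'_q;x''_1,\dots,x''_q)=\sum_{k\in\mathbb{K}}\phi_k(x'_1)\cdots\phi_k(x'_q)\overline{\phi_k(x''_1)}\cdots\overline{\phi_k(x''_q)}$$ is well-defined, and: (i) for all $(x'_1,\dots,x'_q;x''_1,\dots,x''_q)\in\mathcal{X}^q\times\mathcal{X}^q$ and all permutations $\sigma',\sigma''$ of $\{1,\dots,q\}$, $K(x'_{\sigma'(1)},\dots,x'_{\sigma'(q)};x''_{\sigma''(1)},\dots,x''_{\sigma''(q)})=K(x'_1,\dots,x'_q;x''_1,\dots,x''_q)$; (ii) for all $(x';x'')\in\mathcal{X}^q\times\mathcal{X}^q$, $K(x';x'')=\overline{K(x'';x')}$; (iii) for every $(x_i)_{1\le i\le n}\in\mathcal{X}^n$ and every $u\in\mathbb{C}^n$, $\sum_{i_1,\dots,i_q=1}^n\sum_{j_1,\dots,j_q=1}^nK(x_{j_1},\dots,x_{j_q};x_{i_1},\dots,x_{i_q})u_{i_1}\cdots u_{i_q}\overline{u_{j_1}}\cdots\overline{u_{j_q}}\ge0$;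 (iv) for every $(x_i)_{1\le i\le n}\in\mathcal{X}^n$, the map $u\in\mathbb{C}^n\mapsto\big\|\sum_{i=1}^nu_i\Phi(x_i)\big\|_m^m=\sum_{i_1,\dots,i_q=1}^n\sum_{j_1,\dots,j_q=1}^nK(x_{j_1},\dots,x_{j_q};x_{i_1},\dots,x_{i_q})u_{i_1}\cdots u_{i_q}\overline{u_{j_1}}\cdots\overline{u_{j_q}}$ (the equality holding) is a positive homogeneous polynomial form of degree $m$ on $\mathbb{C}^n$; (v) for every $(x'_1,\dots,x'_q)\in\mathcal{X}^q$, $K(x'_1,\dots,x'_q;x'_1,\dots,x'_q)\ge0$; (vi) for every $(x'_1,\dots,x'_q;x''_1,\dots,x''_q)\in\mathcal{X}^q\times\mathcal{X}^q$, $$|K(x'_1,\dots,x'_q;x''_1,\dots,x''_q)|\le\prod_{s=1}^qK(x'_s,\dots,x'_s;x'_s,\dots,x'_s)^{1/m}\prod_{s=1}^qK(x''_s,\dots,x''_s;x''_s,\dots,x''_s)^{1/m}.$$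
   Context: $\ell^m(\mathbb{K};\mathbb{C})$ is the space of complex families $(w_k)_{k\in\mathbb{K}}$ with $\|w\|_m=(\sum_k|w_k|^m)^{1/m}<\infty$. In $K(z,\dots,z;z,\dots,z)$ all $2q$ arguments equal $z$. *)

From HB Require Import structures.
From mathcomp Require Import all_boot all_order all_algebra all_fingroup.
From mathcomp Require Import all_classical all_reals all_analysis.
From mathcomp Require Import complex.
Set Implicit Arguments. Unset Strict Implicit. Unset Printing Implicit Defensive.
Import Order.TTheory GRing.Theory Num.Theory numFieldNormedType.Exports.
Local Open Scope ring_scope.

Section Defs.
Variable R : realType.

Definition cabs (z : R[i]) : R := complex.Re `|z|.

Definition enum_seq {V : nmodType} (K : countType) (w : K -> V) : nat -> V :=
  fun n => match @pickle_inv K n with Some k => w k | None => 0 end.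

Definition summable_nonneg (K : countType) (f : K -> R) : Prop :=
  exists M : R, forall s : seq K, uniq s -> \sum_(k <- s) f k <= M.

Definition abs_summable (K : countType) (w : K -> R[i]) : Prop :=
  summable_nonneg (fun k => cabs (w k)).

Definition in_lm (m : nat) (K : countType) (w : K -> R[i]) : Prop :=
  summable_nonneg (fun k => cabs (w k) ^+ m).

(* sum over K of a real family (meaningful for absolutely summable families,
   where it does not depend on the enumeration) *)
Definition rsum (K : countType) (f : K -> R) : R := limn (series (enum_seq f)).

Definition csum (K : countType) (w : K -> R[i]) : R[i] :=
  Complex (rsum (fun k => complex.Re (w k))) (rsum (fun k => complex.Im (w k))).

Definition lm_norm_pow (m : nat) (K : countType) (w : K -> R[i]) : R :=
  rsum (fun k => cabs (w k) ^+ m).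

Definition Kterm (K : countType) (X : Type) (phi : K -> X -> R[i]) (q : nat)
  (x' x'' : 'I_q -> X) (k : K) : R[i] :=
  (\prod_(s < q) phi k (x' s)) * (\prod_(s < q) (phi k (x'' s))^*).

Definition Kker (K : countType) (X : Type) (phi : K -> X -> R[i]) (q : nat)
  (x' x'' : 'I_q -> X) : R[i] := csum (Kterm phi x' x'').

(* sum_i u_i Phi(x_i), where Phi(x) = (conj (phi_k x))_k *)
Definition Phi_comb (K : countType) (X : Type) (phi : K -> X -> R[i]) (n : nat)
  (x : 'I_n -> X) (u : 'I_n -> R[i]) (k : K) : R[i] :=
  \sum_(i < n) u i * (phi k (x i))^*.

Definition Kform (K : countType) (X : Type) (phi : K -> X -> R[i]) (q n : nat)
  (x : 'I_n -> X) (u : 'I_n -> R[i]) : R[i] :=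
  \sum_(i : {ffun 'I_q -> 'I_n}) \sum_(j : {ffun 'I_q -> 'I_n})
    Kker phi (fun s => x (j s)) (fun s => x (i s)) *
    (\prod_(s < q) u (i s)) * (\prod_(s < q) (u (j s))^*).

End Defs.

From HB Require Import structures.
From mathcomp Require Import all_boot all_order all_algebra all_fingroup.
From mathcomp Require Import all_classical all_reals all_analysis.
From mathcomp Require Import complex ring.
Import Order.TTheory GRing.Theory Num.Theory numFieldNormedType.Exports.
Local Open Scope ring_scope.
Set Implicit Arguments. Unset Strict Implicit. Unset Printing Implicit Defensive.

(* Up to conjugations, the k-th term of the series defining K is a product of
   m values phi_k(y_1), ..., phi_k(y_m). Hoelder's inequality for m factors
   (AM-GM after normalizing each factor by its l^m norm) makes the series
   absolutely convergent and bounds its sum by the product of the l^m norms;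
   since K(x,...,x;x,...,x) = ||(phi_k(x))_k||_m^m this is (vi). Writing
   w_k = sum_i u_i conj(phi_k(x_i)), the summand of the form in (iii)/(iv) is
   the expansion of w_k^q conj(w_k)^q = |w_k|^m, which gives (iii) and (iv);
   (i), (ii) and (v) hold term by term. *)

Section RealFamilies.
Variables (R : realType) (K : countType).
Implicit Types f g : K -> R.

Definition rabs_summable f := summable_nonneg (fun k => `|f k|).

Lemma summable_nonneg_le f g :
  (forall k, f k <= g k) -> summable_nonneg g -> summable_nonneg f.
Proof.
move=> fg [M hM]; exists M => s us; apply: le_trans (hM s us).
by apply: ler_sum => k _.
Qed.

Lemma summable_nonnegD f g :
  summable_nonneg f -> summable_nonneg g -> summable_nonneg (fun k => f k + g k).
Proof.
move=> [M hM] [N hN]; exists (M + N) => s us.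
by rewrite big_split /=; apply: lerD; [apply: hM | apply: hN].
Qed.

Lemma summable_nonnegZ c f :
  0 <= c -> summable_nonneg f -> summable_nonneg (fun k => c * f k).
Proof.
move=> c0 [M hM]; exists (c * M) => s us.
by rewrite -mulr_sumr; apply: ler_wpM2l => //; apply: hM.
Qed.

Lemma summable_nonneg_sum (I : Type) (r : seq I) (P : pred I) (F : I -> K -> R) :
  (forall i, P i -> summable_nonneg (F i)) ->
  summable_nonneg (fun k => \sum_(i <- r | P i) F i k).
Proof.
move=> hF; elim: r => [|a r IH].
  by exists 0 => s _; rewrite big1 // => k _; rewrite big_nil.
case Pa: (P a); last first.
  by apply: summable_nonneg_le IH => k; rewrite big_cons Pa.
by apply: summable_nonneg_le (summable_nonnegD (hF a Pa) IH) => k; rewrite big_cons Pa.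
Qed.

Lemma summable_nonneg_rabs f :
  (forall k, 0 <= f k) -> summable_nonneg f -> rabs_summable f.
Proof. by move=> f0; apply: summable_nonneg_le => k; rewrite ger0_norm. Qed.

Lemma rabs_summableZ c f : rabs_summable f -> rabs_summable (fun k => c * f k).
Proof.
move=> hf; apply: summable_nonneg_le (summable_nonnegZ (normr_ge0 c) hf) => k.
by rewrite normrM.
Qed.

Lemma rabs_summable_sum (I : Type) (r : seq I) (P : pred I) (F : I -> K -> R) :
  (forall i, P i -> rabs_summable (F i)) ->
  rabs_summable (fun k => \sum_(i <- r | P i) F i k).
Proof.
move=> hF; apply: summable_nonneg_le (summable_nonneg_sum r hF) => k.
exact: ler_norm_sum.
Qed.

Lemma enum_seq_ge0 f : (forall k, 0 <= f k) -> forall n, 0 <= enum_seq f n.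
Proof. by move=> f0 n; rewrite /enum_seq; case: pickle_inv. Qed.

Lemma series_enum_seq_le f M :
  (forall s : seq K, uniq s -> \sum_(k <- s) f k <= M) ->
  forall N, series (enum_seq f) N <= M.
Proof.
move=> hM N; have E s : \sum_(n <- s) enum_seq f n = \sum_(k <- pmap (@pickle_inv K) s) f k.
  elim: s => [|a s IH]; first by rewrite !big_nil.
  by rewrite big_cons IH /enum_seq /=; case: pickle_inv => [k|]; rewrite ?big_cons ?add0r.
rewrite /series /= E; apply/hM/(pmap_uniq (@pickle_invK K)).
exact: iota_uniq.
Qed.

Lemma cvgn_series_enum f : rabs_summable f -> cvgn (series (enum_seq f)).
Proof.
move=> [M hM]; apply: normed_cvg.
have -> : [normed series (enum_seq f)] = series (enum_seq (fun k => `|f k|)).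
  apply/funext => N; apply: eq_bigr => n _.
  by rewrite /= /enum_seq; case: pickle_inv; rewrite ?normr0.
apply: nondecreasing_is_cvgn.
  by apply: nondecreasing_series => n _ _; apply: enum_seq_ge0.
by exists M => _ [N _ <-]; apply: series_enum_seq_le.
Qed.

Lemma eq_rsum f g : f =1 g -> rsum f = rsum g.
Proof. by move=> /funext ->. Qed.

Lemma rsum0 : rsum (fun _ : K => 0 : R) = 0.
Proof.
rewrite /rsum (_ : series _ = cst 0) ?lim_cst //.
by apply/funext => n; rewrite /series /= big1 // => i _; rewrite /enum_seq; case: pickle_inv.
Qed.

Lemma rsumD f g : rabs_summable f -> rabs_summable g ->
  rsum (fun k => f k + g k) = rsum f + rsum g.
Proof.
move=> hf hg; rewrite /rsum (_ : enum_seq _ = enum_seq f + enum_seq g).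
  by rewrite lim_seriesD //; apply: cvgn_series_enum.
by apply/funext => n; rewrite /enum_seq !fctE; case: pickle_inv; rewrite ?addr0.
Qed.

Lemma rsumZ c f : rabs_summable f -> rsum (fun k => c * f k) = c * rsum f.
Proof.
move=> hf; rewrite /rsum (_ : enum_seq _ = c *: enum_seq f).
  by rewrite lim_seriesZ //; apply: cvgn_series_enum.
by apply/funext => n; rewrite /enum_seq !fctE; case: pickle_inv; rewrite ?scaler0.
Qed.

Lemma rsumN f : rabs_summable f -> rsum (fun k => - f k) = - rsum f.
Proof. by move=> hf; rewrite -mulN1r -rsumZ //; apply: eq_rsum => k; rewrite mulN1r. Qed.

Lemma rsum_sum (I : Type) (r : seq I) (P : pred I) (F : I -> K -> R) :
  (forall i, P i -> rabs_summable (F i)) ->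
  rsum (fun k => \sum_(i <- r | P i) F i k) = \sum_(i <- r | P i) rsum (F i).
Proof.
move=> hF; elim: r => [|a r IH].
  by rewrite big_nil -[RHS]rsum0; apply: eq_rsum => k; rewrite big_nil.
rewrite big_cons; case Pa: (P a); last first.
  by rewrite -IH; apply: eq_rsum => k; rewrite big_cons Pa.
rewrite -IH -rsumD; [|exact: hF|exact: rabs_summable_sum].
by apply: eq_rsum => k; rewrite big_cons Pa.
Qed.

Lemma ler_rsum f g : rabs_summable f -> rabs_summable g ->
  (forall k, f k <= g k) -> rsum f <= rsum g.
Proof.
move=> hf hg fg; apply: ler_lim; try exact: cvgn_series_enum.
by apply: nearW => n; apply: ler_sum => i _; rewrite /enum_seq; case: pickle_inv.
Qed.

Lemma rsum_ge0 f : rabs_summable f -> (forall k, 0 <= f k) -> 0 <= rsum f.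
Proof.
move=> hf f0; apply: limr_ge; first exact: cvgn_series_enum.
by apply: nearW => n; apply: sumr_ge0 => i _; apply: enum_seq_ge0.
Qed.

Lemma ler_rsum_term f k : rabs_summable f -> (forall k, 0 <= f k) -> f k <= rsum f.
Proof.
move=> hf f0; apply: limr_ge; first exact: cvgn_series_enum.
near=> n; have kn : (pickle k < n)%N by near: n; exact: nbhs_infty_gt.
rewrite /series /= (bigD1_seq (pickle k)) ?mem_index_iota ?iota_uniq //=.
rewrite {1}/enum_seq pickleK_inv lerDl; apply: sumr_ge0 => i _.
exact: enum_seq_ge0.
Unshelve. all: by end_near.
Qed.

Lemma rsum_eq0_nonneg f k : rabs_summable f -> (forall k, 0 <= f k) ->
  rsum f = 0 -> f k = 0.
Proof.
move=> hf f0 S0; apply/eqP; rewrite eq_le f0 andbT -S0.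
exact: ler_rsum_term.
Qed.

End RealFamilies.

Lemma amgm_pow (R : realFieldType) (I : finType) (n : nat) (b : I -> R) :
  #|I| = n -> (0 < n)%N -> (forall i, 0 <= b i) ->
  \prod_i b i <= (\sum_i b i ^+ n) / n%:R.
Proof.
move=> cardI n_gt0 b_ge0.
have AGM : \prod_i b i ^+ n <= ((\sum_i b i ^+ n) / #|I|%:R) ^+ #|I|.
  exact: (@leif_AGM R I predT _ (fun i _ => exprn_ge0 n (b_ge0 i))).1.
rewrite cardI prodrXl in AGM.
by rewrite -(ler_pXn2r n_gt0) ?nnegrE ?prodr_ge0 ?divr_ge0 ?sumr_ge0 // => *; apply: exprn_ge0.
Qed.

Section Hoelder.
Variables (R : realType) (K : countType) (I : finType) (n : nat).
Variable a : I -> K -> R.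
Hypothesis cardI : #|I| = n.
Hypothesis n_gt0 : (0 < n)%N.
Hypothesis a_ge0 : forall i k, 0 <= a i k.
Hypothesis a_lm : forall i, summable_nonneg (fun k => a i k ^+ n).

Lemma summable_nonneg_prod : summable_nonneg (fun k => \prod_i a i k).
Proof.
have ninv_ge0 : 0 <= n%:R^-1 :> R by rewrite invr_ge0.
have := summable_nonneg_sum (index_enum I) (P := xpredT) (fun i _ => a_lm i).
move=> /(summable_nonnegZ ninv_ge0); apply: summable_nonneg_le => k.
by rewrite mulrC; apply: amgm_pow.
Qed.

Lemma hoelder_rsum_prod :
  rsum (fun k => \prod_i a i k) <= \prod_i (rsum (fun k => a i k ^+ n)) `^ (n%:R^-1).
Proof.
have apow_summable i : rabs_summable (fun k => a i k ^+ n).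
  by apply: summable_nonneg_rabs (a_lm i) => k; apply: exprn_ge0.
set S := fun i => rsum (fun k => a i k ^+ n).
have S_ge0 i : 0 <= S i by apply: rsum_ge0 => // k; apply: exprn_ge0.
have [[i Si0]|/forallNP S_neq0] := pselect (exists i, S i = 0).
  have ai0 k : a i k = 0.
    have : a i k ^+ n = 0 by apply: rsum_eq0_nonneg Si0 => // k'; apply: exprn_ge0.
    by move/eqP; rewrite expf_eq0 => /andP[_ /eqP].
  rewrite (@eq_rsum _ _ _ (fun _ => 0)) ?rsum0; last by move=> k; rewrite (bigD1 i) //= ai0 mul0r.
  by apply: prodr_ge0 => j _; apply: powR_ge0.
have S_gt0 i : 0 < S i by rewrite lt_def S_ge0 andbT; apply/eqP.
set N := fun i => S i `^ n%:R^-1.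
have N_gt0 i : 0 < N i by apply: powR_gt0.
have NX i : N i ^+ n = S i.
  rewrite -powR_mulrn ?powR_ge0 // -powRrM mulVf ?powRr1 //.
  by rewrite pnatr_eq0 -lt0n.
have summableS : rabs_summable (fun k => \sum_i (S i)^-1 * a i k ^+ n).
  by apply: rabs_summable_sum => i _; apply: rabs_summableZ.
(* AM-GM for the values a_i(k) / N_i, normalized by N_i = ||a_i||_n *)
have amgm_normalized k : \prod_i a i k <= \prod_i N i * (n%:R^-1 * \sum_i (S i)^-1 * a i k ^+ n).
  have -> : \prod_i a i k = \prod_i N i * \prod_i (a i k / N i).
    by rewrite -big_split /=; apply: eq_bigr => i _; rewrite mulrC divfK ?gt_eqF.
  apply: ler_wpM2l; first by apply: prodr_ge0 => i _; apply: ltW.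
  apply: le_trans (amgm_pow cardI n_gt0 _) _ => [i|].
    by apply: divr_ge0 => //; apply: ltW.
  rewrite mulrC (eq_bigr (fun i => (S i)^-1 * a i k ^+ n)) // => i _.
  by rewrite expr_div_n NX mulrC.
apply: le_trans (ler_rsum _ _ amgm_normalized) _.
- apply: summable_nonneg_rabs summable_nonneg_prod => k.
  by apply: prodr_ge0 => i _.
- by do 2 apply: rabs_summableZ.
rewrite !rsumZ ?rsum_sum; try by [do ?apply: rabs_summableZ | move=> i _; apply: rabs_summableZ].
have -> : \sum_i rsum (fun k => (S i)^-1 * a i k ^+ n) = n%:R.
  rewrite -[n in RHS]cardI -sumr_const; apply: eq_bigr => i _.
  by rewrite rsumZ // mulVf ?gt_eqF.
by rewrite mulVf ?mulr1 // pnatr_eq0 -lt0n.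
Qed.

End Hoelder.

Section ComplexModulus.
Variable R : realType.
Implicit Types z w : R[i].

Lemma normcE_cabs z : `|z| = ((cabs z)%:C)%C.
Proof. by rewrite /cabs normc_def. Qed.

Lemma cabs_ge0 z : 0 <= cabs z.
Proof. by rewrite -ler0c -normcE_cabs. Qed.

Lemma cabsR (x : R) : 0 <= x -> cabs ((x%:C)%C) = x.
Proof. by move=> x0; apply: complexI; rewrite -normcE_cabs ger0_norm // ler0c. Qed.

Lemma cabsM z w : cabs (z * w) = cabs z * cabs w.
Proof. by apply: complexI; rewrite rmorphM /= -!normcE_cabs normrM. Qed.

Lemma cabs_prod (I : Type) (r : seq I) (P : pred I) (F : I -> R[i]) :
  cabs (\prod_(i <- r | P i) F i) = \prod_(i <- r | P i) cabs (F i).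
Proof.
apply: complexI; rewrite rmorph_prod /= -normcE_cabs normr_prod.
by apply: eq_bigr => i _; rewrite normcE_cabs.
Qed.

Lemma cabsJ z : cabs (z^*)%C = cabs z.
Proof. by rewrite /cabs normcJ. Qed.

Lemma cabs_sum (I : Type) (r : seq I) (P : pred I) (F : I -> R[i]) :
  cabs (\sum_(i <- r | P i) F i) <= \sum_(i <- r | P i) cabs (F i).
Proof.
rewrite -lecR -normcE_cabs rmorph_sum /=; apply: le_trans (ler_norm_sum _ _ _) _.
by apply: ler_sum => i _; rewrite normcE_cabs.
Qed.

Lemma mulcJ_cabs z : z * z^*%C = ((cabs z ^+ 2)%:C)%C.
Proof. by rewrite -sqr_normc normcE_cabs rmorphXn. Qed.

Lemma cabs_Re z : `|complex.Re z| <= cabs z.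
Proof. by rewrite -lecR -normcE_cabs normc_ge_Re. Qed.

Lemma cabs_Im z : `|complex.Im z| <= cabs z.
Proof.
have : (cabs z ^+ 2)%:C%C = ((complex.Re z)^+2 + (complex.Im z)^+2)%:C%C.
  by rewrite add_Re2_Im2 normcE_cabs rmorphXn.
move=> /complexI cabs2; rewrite -(ler_pXn2r (n := 2)) ?nnegrE ?cabs_ge0 //.
by rewrite cabs2 real_normK ?num_real // lerDr sqr_ge0.
Qed.

Lemma complex_ReM z w :
  complex.Re (z * w) = complex.Re z * complex.Re w - complex.Im z * complex.Im w.
Proof. by case: z; case: w. Qed.

Lemma complex_ImM z w :
  complex.Im (z * w) = complex.Re z * complex.Im w + complex.Im z * complex.Re w.
Proof. by case: z; case: w. Qed.

End ComplexModulus.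

Section ComplexFamilies.
Variables (R : realType) (K : countType).
Implicit Types w : K -> R[i].

Lemma abs_summable_Re w : abs_summable w -> rabs_summable (fun k => complex.Re (w k)).
Proof. by apply: summable_nonneg_le => k; apply: cabs_Re. Qed.

Lemma abs_summable_Im w : abs_summable w -> rabs_summable (fun k => complex.Im (w k)).
Proof. by apply: summable_nonneg_le => k; apply: cabs_Im. Qed.

Lemma abs_summable_cabs w : abs_summable w -> rabs_summable (fun k => cabs (w k)).
Proof. by apply: summable_nonneg_rabs => k; apply: cabs_ge0. Qed.

Lemma abs_summableZ c w : abs_summable w -> abs_summable (fun k => c * w k).
Proof.
move=> h; apply: summable_nonneg_le (summable_nonnegZ (cabs_ge0 c) h) => k.
by rewrite cabsM.
Qed.

Lemma abs_summableZr c w : abs_summable w -> abs_summable (fun k => w k * c).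
Proof. by move=> /(abs_summableZ c); under eq_fun do rewrite mulrC. Qed.

Lemma abs_summable_sum (I : Type) (r : seq I) (P : pred I) (F : I -> K -> R[i]) :
  (forall i, P i -> abs_summable (F i)) ->
  abs_summable (fun k => \sum_(i <- r | P i) F i k).
Proof.
move=> hF; apply: summable_nonneg_le (summable_nonneg_sum r hF) => k.
exact: cabs_sum.
Qed.

Lemma eq_csum w1 w2 : w1 =1 w2 -> csum w1 = csum w2.
Proof. by move=> /funext ->. Qed.

Lemma csum0 : csum (fun _ : K => 0 : R[i]) = 0.
Proof. by rewrite /csum rsum0. Qed.

Lemma csumD w1 w2 : abs_summable w1 -> abs_summable w2 ->
  csum (fun k => w1 k + w2 k) = csum w1 + csum w2.
Proof.
move=> h1 h2; apply/eqP; rewrite eq_complex /csum /=.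
rewrite -!rsumD; try exact: abs_summable_Re; try exact: abs_summable_Im.
by apply/andP; split; apply/eqP; apply: eq_rsum => k; rewrite raddfD.
Qed.

Lemma csumZ c w : abs_summable w -> csum (fun k => c * w k) = c * csum w.
Proof.
move=> h; have hRe := abs_summable_Re h; have hIm := abs_summable_Im h.
apply/eqP; rewrite eq_complex /csum /=; apply/andP; split; apply/eqP.
  transitivity (rsum (fun k => complex.Re c * complex.Re (w k) +
                               (- complex.Im c) * complex.Im (w k))).
    by apply: eq_rsum => k; rewrite complex_ReM mulNr.
  by rewrite rsumD ?rsumZ ?complex_ReM ?mulNr //; apply: rabs_summableZ.
transitivity (rsum (fun k => complex.Re c * complex.Im (w k) +
                             complex.Im c * complex.Re (w k))).
  by apply: eq_rsum => k; rewrite complex_ImM.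
by rewrite rsumD ?rsumZ ?complex_ImM //; apply: rabs_summableZ.
Qed.

Lemma csumZr c w : abs_summable w -> csum (fun k => w k * c) = csum w * c.
Proof. by move=> h; rewrite mulrC -csumZ //; apply: eq_csum => k; apply: mulrC. Qed.

Lemma csum_sum (I : Type) (r : seq I) (P : pred I) (F : I -> K -> R[i]) :
  (forall i, P i -> abs_summable (F i)) ->
  csum (fun k => \sum_(i <- r | P i) F i k) = \sum_(i <- r | P i) csum (F i).
Proof.
move=> hF; elim: r => [|a r IH].
  by rewrite big_nil -[RHS]csum0; apply: eq_csum => k; rewrite big_nil.
rewrite big_cons; case Pa: (P a); last first.
  by rewrite -IH; apply: eq_csum => k; rewrite big_cons Pa.
rewrite -IH -csumD; [|exact: hF|exact: abs_summable_sum].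
by apply: eq_csum => k; rewrite big_cons Pa.
Qed.

Lemma csumJ w : abs_summable w -> csum (fun k => (w k)^*)%C = (csum w)^*%C.
Proof.
move=> h; apply/eqP; rewrite eq_complex /csum /= -rsumN; last exact: abs_summable_Im.
by apply/andP; split; apply/eqP; apply: eq_rsum => k; case: (w k).
Qed.

Lemma csumR (f : K -> R) : csum (fun k => (f k)%:C%C) = (rsum f)%:C%C.
Proof. by rewrite /csum /= rsum0. Qed.

(* The triangle inequality, after rotating [csum w] onto the positive real axis. *)
Lemma cabs_csum_le w : abs_summable w -> cabs (csum w) <= rsum (fun k => cabs (w k)).
Proof.
move=> h; set S := csum w.
have [->|S_neq0] := eqVneq S 0.
  rewrite (cabsR (lexx 0)); apply: rsum_ge0 => [|k]; last exact: cabs_ge0.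
  exact: abs_summable_cabs.
have cabsS_neq0 : cabs S != 0.
  by apply: contra S_neq0 => /eqP S0; rewrite -normr_eq0 normcE_cabs S0.
set c := S^*%C / (cabs S)%:C%C.
have cS : c * S = (cabs S)%:C%C.
  by rewrite /c mulrAC (mulrC _ S) mulcJ_cabs -fmorph_div /= expr2 mulfK.
have cabs_c : cabs c = 1.
  by apply: (mulIf cabsS_neq0); rewrite mul1r -cabsM cS cabsR ?cabs_ge0.
have -> : cabs S = complex.Re (csum (fun k => c * w k)) by rewrite csumZ // cS.
apply: ler_rsum; [exact/abs_summable_Re/abs_summableZ | exact: abs_summable_cabs |].
move=> k; apply: le_trans (ler_norm _) _; apply: le_trans (cabs_Re _) _.
by rewrite cabsM cabs_c mul1r.
Qed.

End ComplexFamilies.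

Lemma sum_ffun_prod (T : comPzSemiRingType) (I J : finType) (G : J -> T) :
  \sum_(f : {ffun I -> J}) \prod_i G (f i) = (\sum_j G j) ^+ #|I|.
Proof. by rewrite -(bigA_distr_bigA (fun _ j => G j)) prodr_const. Qed.

Section Kernel.
Variables (R : realType) (K : countType) (X : Type) (m q : nat).
Variable phi : K -> X -> R[i].
Hypothesis mE : m = (q + q)%N.
Hypothesis q_gt0 : (0 < q)%N.
Hypothesis phi_lm : forall x : X, in_lm m (fun k => phi k x).

Let m_gt0 : (0 < m)%N. Proof. by rewrite mE addn_gt0 q_gt0. Qed.

Lemma exprJ_cabs (z : R[i]) : z ^+ q * z^*%C ^+ q = ((cabs z ^+ m)%:C)%C.
Proof. by rewrite -exprMn mulcJ_cabs -rmorphXn -exprM mul2n -addnn -mE. Qed.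

Definition pts_cat (x' x'' : 'I_q -> X) (i : 'I_q + 'I_q) : X :=
  match i with inl s => x' s | inr s => x'' s end.

Lemma card_ord_sum : #|{: 'I_q + 'I_q}| = m.
Proof. by rewrite card_sum card_ord mE. Qed.

Lemma cabs_Kterm (x' x'' : 'I_q -> X) k :
  cabs (Kterm phi x' x'' k) = \prod_i cabs (phi k (pts_cat x' x'' i)).
Proof.
rewrite /Kterm cabsM !cabs_prod big_sumType /=; congr (_ * _).
by apply: eq_bigr => s _; rewrite cabsJ.
Qed.

(* Each |Kterm k| is a product of m factors |phi_k(y)| with (phi_k(y))_k in l^m. *)
Lemma Kterm_abs_summable (x' x'' : 'I_q -> X) : abs_summable (Kterm phi x' x'').
Proof.
have := summable_nonneg_prod (a := fun i k => cabs (phi k (pts_cat x' x'' i)))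
  card_ord_sum m_gt0 (fun _ _ => cabs_ge0 _) (fun i => phi_lm _).
by apply: summable_nonneg_le => k; rewrite cabs_Kterm.
Qed.

Lemma Kker_const (x : X) :
  Kker phi (fun _ : 'I_q => x) (fun _ => x) = ((lm_norm_pow m (fun k => phi k x))%:C)%C.
Proof.
rewrite /Kker -csumR; apply: eq_csum => k.
by rewrite /Kterm !prodr_const card_ord exprJ_cabs.
Qed.

Lemma Kker_perm (x' x'' : 'I_q -> X) (s' s'' : 'S_q) :
  Kker phi (fun s => x' (s' s)) (fun s => x'' (s'' s)) = Kker phi x' x''.
Proof.
apply: eq_csum => k; rewrite /Kterm; congr (_ * _).
  by rewrite [RHS](reindex_inj (@perm_inj _ s')).
by rewrite [RHS](reindex_inj (@perm_inj _ s'')).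
Qed.

Lemma KkerJ (x' x'' : 'I_q -> X) : Kker phi x' x'' = (Kker phi x'' x')^*%C.
Proof.
rewrite /Kker -csumJ; last exact: Kterm_abs_summable.
apply: eq_csum => k; rewrite /Kterm rmorphM /= !rmorph_prod /= mulrC; congr (_ * _).
by apply: eq_bigr => s _; rewrite conjcK.
Qed.

Lemma Kker_diag_ge0 (x' : 'I_q -> X) : 0 <= Kker phi x' x'.
Proof.
have Kterm_sqr k : Kterm phi x' x' k = ((cabs (\prod_s phi k (x' s)) ^+ 2)%:C)%C.
  by rewrite /Kterm -mulcJ_cabs rmorph_prod.
rewrite /Kker (eq_csum Kterm_sqr) csumR ler0c.
apply: rsum_ge0 => [|k]; last by rewrite exprn_ge0 ?cabs_ge0.
apply: summable_nonneg_le (Kterm_abs_summable x' x') => k.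
by rewrite Kterm_sqr cabsR ?ger0_norm // exprn_ge0 ?cabs_ge0.
Qed.

Lemma cabs_Kker_le (x' x'' : 'I_q -> X) :
  cabs (Kker phi x' x'') <=
    (\prod_(s < q) (complex.Re (Kker phi (fun _ : 'I_q => x' s) (fun _ => x' s))) `^ (m%:R^-1)) *
    (\prod_(s < q) (complex.Re (Kker phi (fun _ : 'I_q => x'' s) (fun _ => x'' s))) `^ (m%:R^-1)).
Proof.
apply: le_trans (cabs_csum_le (Kterm_abs_summable x' x'')) _.
rewrite (eq_rsum (cabs_Kterm x' x'')).
apply: le_trans (hoelder_rsum_prod (a := fun i k => cabs (phi k (pts_cat x' x'' i)))
  card_ord_sum m_gt0 (fun _ _ => cabs_ge0 _) (fun i => phi_lm _)) _.
have Re_Kker_const (y : 'I_q -> X) :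
    \prod_(s < q) (complex.Re (Kker phi (fun _ : 'I_q => y s) (fun _ => y s))) `^ (m%:R^-1) =
    \prod_(s < q) (lm_norm_pow m (fun k => phi k (y s))) `^ (m%:R^-1).
  by apply: eq_bigr => s _; rewrite Kker_const.
by rewrite !Re_Kker_const big_sumType.
Qed.

Definition Kform_term n (x : 'I_n -> X) (u : 'I_n -> R[i]) (k : K) : R[i] :=
  \sum_(i : {ffun 'I_q -> 'I_n}) \sum_(j : {ffun 'I_q -> 'I_n})
    Kterm phi (fun s => x (j s)) (fun s => x (i s)) k *
    (\prod_(s < q) u (i s)) * (\prod_(s < q) (u (j s))^*%C).

Lemma Kform_term_abs_summable n (x : 'I_n -> X) u : abs_summable (Kform_term x u).
Proof.
do 2 apply: abs_summable_sum => ? _.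
by do 2 apply: abs_summableZr; apply: Kterm_abs_summable.
Qed.

Lemma Kform_csum n (x : 'I_n -> X) u : Kform phi q x u = csum (Kform_term x u).
Proof.
have Kterm_prod_summable i j : abs_summable (fun k =>
    Kterm phi (fun s => x (j s)) (fun s => x (i s)) k *
    (\prod_(s < q) u (i s)) * (\prod_(s < q) (u (j s))^*%C)).
  by do 2 apply: abs_summableZr; apply: Kterm_abs_summable.
rewrite /Kform_term csum_sum => [|i _]; last by apply: abs_summable_sum => j _.
apply: eq_bigr => i _; rewrite csum_sum //; apply: eq_bigr => j _.
by rewrite !csumZr //; do ?apply: abs_summableZr; apply: Kterm_abs_summable.
Qed.

(* Expanding the q-th powers of [Phi_comb] and of its conjugate by distributivity. *)
Lemma Kform_termE n (x : 'I_n -> X) u k :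
  Kform_term x u k = ((cabs (Phi_comb phi x u k) ^+ m)%:C)%C.
Proof.
set w := Phi_comb phi x u k.
have wE : w = \sum_a (phi k (x a))^*%C * u a.
  by apply: eq_bigr => a _; rewrite mulrC.
have wJE : w^*%C = \sum_a phi k (x a) * (u a)^*%C.
  by rewrite rmorph_sum; apply: eq_bigr => a _; rewrite rmorphM /= conjcK mulrC.
have sum_ffun_prod_q (G : 'I_n -> R[i]) :
    \sum_(f : {ffun 'I_q -> 'I_n}) \prod_s G (f s) = (\sum_a G a) ^+ q.
  by rewrite sum_ffun_prod card_ord.
rewrite -exprJ_cabs {1}wE wJE -!sum_ffun_prod_q mulr_suml.
apply: eq_bigr => i _; rewrite mulr_sumr; apply: eq_bigr => j _.
by rewrite /Kterm -!big_split /=; apply: eq_bigr => s _; ring.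
Qed.

Lemma Kform_lm_norm n (x : 'I_n -> X) u :
  in_lm m (Phi_comb phi x u) /\
  ((lm_norm_pow m (Phi_comb phi x u))%:C)%C = Kform phi q x u.
Proof.
split; last by rewrite Kform_csum (eq_csum (Kform_termE x u)) csumR.
apply: summable_nonneg_le (Kform_term_abs_summable x u) => k.
by rewrite Kform_termE cabsR // exprn_ge0 ?cabs_ge0.
Qed.

Lemma Kform_ge0 n (x : 'I_n -> X) u : 0 <= Kform phi q x u.
Proof.
have [h <-] := Kform_lm_norm x u.
rewrite ler0c; apply: rsum_ge0 => [|k]; last by rewrite exprn_ge0 ?cabs_ge0.
by apply: summable_nonneg_rabs h => k; rewrite exprn_ge0 ?cabs_ge0.
Qed.

Lemma KformZ n (x : 'I_n -> X) (c : R[i]) u :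
  Kform phi q x (fun i => c * u i) = ((cabs c ^+ m)%:C)%C * Kform phi q x u.
Proof.
rewrite -exprJ_cabs /Kform mulr_sumr; apply: eq_bigr => i _.
rewrite mulr_sumr; apply: eq_bigr => j _.
under [X in _ * X = _]eq_bigr do rewrite rmorphM.
by rewrite !big_split /= !prodr_const card_ord; ring.
Qed.

End Kernel.

Unset Implicit Arguments.

Theorem proposition4p14 (R : realType) (K : countType) (d : measure_display)
  (X : measurableType d) (m : nat) (phi : K -> X -> R[i])
  (hm2 : (2 <= m)%N) (hmeven : ~~ odd m) (hX : inhabited X)
  (hmeas : forall k, measurable_fun setT (fun x => complex.Re (phi k x)) /\
                     measurable_fun setT (fun x => complex.Im (phi k x)))
  (hlm : forall x : X, in_lm m (fun k => phi k x)) :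
  let q := m./2 in
  (* K is well defined: the defining series converges absolutely *)
  (forall x' x'' : 'I_q -> X, abs_summable (Kterm phi x' x'')) /\
  (* (i) *)
  (forall (x' x'' : 'I_q -> X) (s' s'' : 'S_q),
      Kker phi (fun s => x' (s' s)) (fun s => x'' (s'' s)) = Kker phi x' x'') /\
  (* (ii) *)
  (forall x' x'' : 'I_q -> X, Kker phi x' x'' = (Kker phi x'' x')^*) /\
  (* (iii) *)
  (forall (n : nat) (x : 'I_n -> X) (u : 'I_n -> R[i]), 0 <= Kform phi q x u) /\
  (* (iv) *)
  (forall (n : nat) (x : 'I_n -> X),
      (forall u : 'I_n -> R[i],
          in_lm m (Phi_comb phi x u) /\
          ((lm_norm_pow m (Phi_comb phi x u))%:C)%C = Kform phi q x u) /\
      (forall u : 'I_n -> R[i], 0 <= Kform phi q x u) /\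
      (forall (c : R[i]) (u : 'I_n -> R[i]),
          Kform phi q x (fun i => c * u i) = ((cabs c ^+ m)%:C)%C * Kform phi q x u)) /\
  (* (v) *)
  (forall x' : 'I_q -> X, 0 <= Kker phi x' x') /\
  (* (vi) *)
  (forall x' x'' : 'I_q -> X,
      cabs (Kker phi x' x'') <=
        (\prod_(s < q) (complex.Re (Kker phi (fun _ : 'I_q => x' s) (fun _ : 'I_q => x' s))) `^ (m%:R^-1)) *
        (\prod_(s < q) (complex.Re (Kker phi (fun _ : 'I_q => x'' s) (fun _ : 'I_q => x'' s))) `^ (m%:R^-1))).
Proof.
move=> q.
have mE : m = (q + q)%N by rewrite addnn -[LHS]odd_double_half (negbTE hmeven).
have q_gt0 : (0 < q)%N by rewrite half_gt0.
split; first exact: Kterm_abs_summable mE q_gt0 hlm.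
split; first exact: Kker_perm.
split; first exact: KkerJ mE q_gt0 hlm.
split; first exact: Kform_ge0 mE q_gt0 hlm.
split.
  move=> n x; split; [|split] => [u|u|c u]; first exact: (Kform_lm_norm mE q_gt0 hlm x u).
    exact: (Kform_ge0 mE q_gt0 hlm x u).
  exact: (KformZ phi mE x c u).
split; first exact: Kker_diag_ge0 mE q_gt0 hlm.
exact: cabs_Kker_le mE q_gt0 hlm.
Qed.
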